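(* Let $\alpha \ge 1$ and let $\mathcal{F}$ be a $k$-uniform hypergraph on $[n]$. Suppose that the transposition $(ij)$ of two vertices $i \neq j$ is an automorphism of $\mathcal{F}$. Let $\vec{w} \in \mathbb{R}^n$ with $\|\vec{w}\|_\alpha = 1$ and $w_t \ge 0$ for all $1 \le t \le n$. Define $\vec{w}'$ by $w'_i = w'_j = ((w_i^\alpha + w_j^\alpha)/2)^{1/\alpha}$ and $w'_t = w_t$ for $t \in [n]\setminus\{i,j\}$. Then $\tau_{\mathcal{F}}(\vec{w}',\dots,\vec{w}') \ge \tau_{\mathcal{F}}(\vec{w},\dots,\vec{w})$.
   Context: For a $k$-uniform hypergraph $\mathcal{F}$ on $[n]$ and $x\in\mathbb{R}^n$, $\tau_{\mathcal{F}}(x,\dots,x) = k!\sum_{\{i_1,\dots,i_k\}\in E(\mathcal{F})}x_{i_1}\cdots x_{i_k}$. $\|x\|_\alpha = (\sum_i|x_i|^\alpha)^{1/\alpha}$. *)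

From HB Require Import structures.
From mathcomp Require Import all_boot all_order all_algebra all_fingroup.
From mathcomp Require Import all_classical all_reals all_analysis.
Set Implicit Arguments. Unset Strict Implicit. Unset Printing Implicit Defensive.
Import Order.TTheory GRing.Theory Num.Theory.
Local Open Scope ring_scope.

Definition k_uniform (n k : nat) (E : {set {set 'I_n}}) : Prop :=
  forall e, e \in E -> #|e| = k.

Definition hyp_automorphism (n : nat) (E : {set {set 'I_n}}) (s : {perm 'I_n}) : Prop :=
  forall e : {set 'I_n}, (s @: e \in E) = (e \in E).

Definition tau (R : realType) (n k : nat) (E : {set {set 'I_n}}) (x : 'I_n -> R) : R :=
  (k`!)%:R * \sum_(e in E) \prod_(v in e) x v.

Definition lpnorm (R : realType) (n : nat) (alpha : R) (x : 'I_n -> R) : R :=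
  (\sum_(t < n) `|x t| `^ alpha) `^ alpha^-1.

Definition wsym (R : realType) (n : nat) (alpha : R) (i j : 'I_n) (w : 'I_n -> R) : 'I_n -> R :=
  fun t => if (t == i) || (t == j) then
             ((w i `^ alpha + w j `^ alpha) / 2) `^ alpha^-1
           else w t.

From HB Require Import structures.
From mathcomp Require Import all_boot all_order all_algebra all_fingroup.
From mathcomp Require Import all_classical all_reals all_analysis.
From mathcomp Require Import ring lra.
Import Order.TTheory GRing.Theory Num.Theory.
Local Open Scope ring_scope.

(* Since the transposition s = (ij) is an automorphism, tau(w) = tau(w o s), so
   2 tau(w) is the sum over edges e of  P_e(w) + P_e(w o s), where P_e is the
   monomial of e.  Isolating the variables w_i, w_j, each such sum is Q times
   one of 2, w_i + w_j or 2 w_i w_j, according to how many of i, j lie in e;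
   replacing w_i, w_j by their alpha-power mean c gives Q times 2, 2c or 2c^2.
   The power mean dominates the arithmetic mean, which dominates the geometric
   mean, so every edge contributes at least as much to 2 tau(w'). *)

Lemma arith_mean_le_power_mean (R : realType) (p a b : R) :
  1 <= p -> 0 <= a -> 0 <= b ->
  (a + b) / 2 <= ((a `^ p + b `^ p) / 2) `^ p^-1.
Proof.
move=> p1 a0 b0.
have p0 : 0 < p by rewrite (lt_le_trans _ p1).
have mean0 : 0 <= (a + b) / 2 by rewrite divr_ge0 ?addr_ge0.
have jensen : ((a + b) / 2) `^ p <= (a `^ p + b `^ p) / 2.
  have half0 : 0 <= (2^-1 : R) by rewrite invr_ge0.
  have half1 : (2^-1 : R) <= 1 by rewrite invf_le1 ?ler1n.
  have -> : (a + b) / 2 = 2^-1 * a + (1 - 2^-1) * b by field.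
  have -> : (a `^ p + b `^ p) / 2 = 2^-1 * a `^ p + (1 - 2^-1) * b `^ p by field.
  have := convex_powR p1 (Itv01 half0 half1) (x := a) (y := b).
  by rewrite convRE /=; apply; rewrite ?inE/= ?in_itv/= ?andbT.
rewrite -[leLHS]powRr1 // -[X in _ `^ X](mulfV (lt0r_neq0 p0)) powRrM.
apply: ge0_ler_powR jensen; rewrite ?invr_ge0 ?ltW ?nnegrE ?powR_ge0 //.
by rewrite divr_ge0 ?addr_ge0 ?powR_ge0.
Qed.

Lemma prod_in_pred1 (R : comNzRingType) (T : finType) (P : pred T) (a : T)
    (x : T -> R) :
  \prod_(v | P v && (v == a)) x v = if P a then x a else 1.
Proof. by rewrite big_andbC big_mkcondr big_pred1_eq. Qed.

Lemma prod_isolate2 (R : comNzRingType) (T : finType) (i j : T) (x : T -> R)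
    (e : {set T}) :
  i != j ->
  \prod_(v in e) x v = (if i \in e then x i else 1) * (if j \in e then x j else 1) *
    \prod_(v in e | (v != i) && (v != j)) x v.
Proof.
move=> ij.
rewrite (bigID (pred1 i)) /= prod_in_pred1 (bigID (pred1 j)) /= prod_in_pred1.
rewrite eq_sym ij andbT mulrA.
by congr (_ * _); apply: eq_bigl => v; rewrite andbA.
Qed.

Lemma sum_prod_automorphism (R : comNzRingType) (n : nat) (E : {set {set 'I_n}})
    (s : {perm 'I_n}) (x : 'I_n -> R) :
  hyp_automorphism E s ->
  \sum_(e in E) \prod_(v in e) x (s v) = \sum_(e in E) \prod_(v in e) x v.
Proof.
move=> autE.
rewrite [RHS](reindex_inj (imset_inj (@perm_inj _ s))) /=.
apply: eq_big => [e|e _]; first by rewrite autE.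
by rewrite big_imset //= => u v _ _; apply: perm_inj.
Qed.

(* The three cases i, j in e / exactly one of them / neither, with a, b the
   values at i, j and c their replacement. *)
Lemma swap_monomials_le (R : realFieldType) (bi bj : bool) (a b c q : R) :
  0 <= a -> 0 <= b -> (a + b) / 2 <= c -> 0 <= q ->
  (if bi then a else 1) * (if bj then b else 1) * q +
  (if bi then b else 1) * (if bj then a else 1) * q <=
  2 * ((if bi then c else 1) * (if bj then c else 1) * q).
Proof.
move=> a0 b0 mean_le q0.
have mean0 : 0 <= (a + b) / 2 by rewrite divr_ge0 ?addr_ge0.
have c0 : 0 <= c := le_trans mean0 mean_le.
have amgm : a * b <= c * c.
  apply: le_trans (ler_pM mean0 mean0 mean_le mean_le).
  rewrite -subr_ge0.
  have -> : (a + b) / 2 * ((a + b) / 2) - a * b = (a - b) ^+ 2 / 4 by field.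
  by rewrite divr_ge0 ?sqr_ge0.
have h2 : 0 <= (c * c - a * b) * q by rewrite mulr_ge0 ?subr_ge0.
have h1 : 0 <= (2 * c - (a + b)) * q by rewrite mulr_ge0 ?subr_ge0 //; lra.
by case: bi; case: bj; nra.
Qed.

Theorem lemma11 (R : realType) (alpha : R) (n k : nat)
  (E : {set {set 'I_n}}) (i j : 'I_n) (w : 'I_n -> R) :
  1 <= alpha ->
  k_uniform k E ->
  i != j ->
  hyp_automorphism E (tperm i j) ->
  lpnorm alpha w = 1 ->
  (forall t, 0 <= w t) ->
  tau k E (wsym alpha i j w) >= tau k E w.
Proof.
move=> alpha1 _ ij autE _ w0.
set w' := wsym alpha i j w.
have mean_le : (w i + w j) / 2 <= w' i.
  by rewrite /w' /wsym eqxx arith_mean_le_power_mean.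
have w'E : w' j = w' i by rewrite /w' /wsym !eqxx orbT.
have edge_le (e : {set 'I_n}) : \prod_(v in e) w v + \prod_(v in e) w (tperm i j v)
    <= 2 * \prod_(v in e) w' v.
  rewrite !(@prod_isolate2 _ _ i j _ e ij) tpermL tpermR w'E.
  have -> : \prod_(v in e | (v != i) && (v != j)) w (tperm i j v) =
            \prod_(v in e | (v != i) && (v != j)) w v.
    by apply: eq_bigr => v /andP[_ /andP[vi vj]]; rewrite tpermD // eq_sym.
  have -> : \prod_(v in e | (v != i) && (v != j)) w' v =
            \prod_(v in e | (v != i) && (v != j)) w v.
    by apply: eq_bigr => v /andP[_ /andP[vi vj]]; rewrite /w' /wsym (negbTE vi) (negbTE vj).
  by apply: swap_monomials_le => //; apply: prodr_ge0.
have sum_le : \sum_(e in E) (\prod_(v in e) w v + \prod_(v in e) w (tperm i j v))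
    <= \sum_(e in E) 2 * \prod_(v in e) w' v.
  by apply: ler_sum => e _; apply: edge_le.
rewrite big_split /= sum_prod_automorphism // -mulr_sumr in sum_le.
rewrite /tau; apply: ler_wpM2l => //; lra.
Qed.
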